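(* Let $k,m$ be positive integers, $n=4k$, and let $A\in\mathbb{R}^{m\times n}$ have $2k$-restricted isometry constant $\delta_{2k}\in[\frac{\sqrt{2}}{2},1)$. Let $x\in\mathbb{R}^n$, $\epsilon\ge 0$, $e\in\mathbb{R}^m$ with $\|e\|_2\le\epsilon$, and $y=Ax+e$. For $p\in(0,1)$ let $x^{\star}$ be a solution of $\min_{\gamma\in\mathbb{R}^n}\|\gamma\|_p$ subject to $\|y-A\gamma\|_2\le\epsilon$, and let $T_0^c=\{k+1,\dots,n\}$. Let $$\bar C(p)=(1+\delta_{2k})2^{\frac p2-1}\Big(\frac{g(p)}{1-\delta_{2k}}\Big)^{p/2}.$$ Then for each $p\in(0,1)$ with $\bar C(p)<1$, $$\|x-x^{\star}\|_p^p\le \bar C_0\|x_{T_0^c}\|_p^p+\bar C_1k^{1-\frac p2}\epsilon^p,\qquad \bar C_0=\frac{2(1+\bar C(p))}{1-\bar C(p)},\quad \bar C_1=\frac{2^{p+2}}{(1-\delta_{2k})^{\frac p2}(1-\bar C(p))}.$$ In particular, if $\epsilon=0$ and $x$ is $k$-sparse, then $x^{\star}=x$.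
   Context: For $1\le s\le n$, the $s$-restricted isometry constant $\delta_s$ of $A$ is the smallest constant such that $(1-\delta_s)\|z\|_2^2\le\|Az\|_2^2\le(1+\delta_s)\|z\|_2^2$ for all $s$-sparse $z\in\mathbb{R}^n$. For $p\in(0,1)$, $\|\gamma\|_p=(\sum_i|\gamma_i|^p)^{1/p}$. For a vector $v$ and index set $T$, $v_T$ is the vector equal to $v$ on $T$ and zero elsewhere. $g(p)=\frac{p}{2}(1-\frac{p}{2})^{\frac{2}{p}-1}$. *)

From HB Require Import structures.
From mathcomp Require Import all_boot all_order all_algebra.
From mathcomp Require Import reals exp.
Set Implicit Arguments. Unset Strict Implicit. Unset Printing Implicit Defensive.
Import Order.TTheory GRing.Theory Num.Theory.
Local Open Scope ring_scope.

Section Defs.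
Variable R : realType.

Definition l2norm (n : nat) (v : 'cV[R]_n) : R := Num.sqrt (\sum_i (v i ord0) ^+ 2).

Definition lpnorm (p : R) (n : nat) (v : 'cV[R]_n) : R :=
  (\sum_i `|v i ord0| `^ p) `^ (1 / p).

Definition sparse (s : nat) (n : nat) (z : 'cV[R]_n) : Prop :=
  (#|[set i : 'I_n | z i ord0 != 0%R]| <= s)%N.

Definition RIP_bound (m n : nat) (A : 'M[R]_(m, n)) (s : nat) (d : R) : Prop :=
  forall z : 'cV[R]_n, sparse s z ->
    (1 - d) * l2norm z ^+ 2 <= l2norm (A *m z) ^+ 2 /\
    l2norm (A *m z) ^+ 2 <= (1 + d) * l2norm z ^+ 2.

Definition is_RIC (m n : nat) (A : 'M[R]_(m, n)) (s : nat) (d : R) : Prop :=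
  RIP_bound A s d /\ forall d', RIP_bound A s d' -> d <= d'.

Definition restrict (n : nat) (v : 'cV[R]_n) (T : {set 'I_n}) : 'cV[R]_n :=
  \col_i (if i \in T then v i ord0 else 0).

Definition g (p : R) : R := p / 2 * (1 - p / 2) `^ (2 / p - 1).

Definition Cbar (d p : R) : R :=
  (1 + d) * 2 `^ (p / 2 - 1) * (g p / (1 - d)) `^ (p / 2).

Definition C0bar (d p : R) : R := 2 * (1 + Cbar d p) / (1 - Cbar d p).

Definition C1bar (d p : R) : R :=
  2 `^ (p + 2) / ((1 - d) `^ (p / 2) * (1 - Cbar d p)).

End Defs.

From HB Require Import structures.
From mathcomp Require Import all_boot all_order all_algebra.
From mathcomp Require Import reals exp.
From mathcomp Require Import ring lra zify.
Set Implicit Arguments. Unset Strict Implicit. Unset Printing Implicit Defensive.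
Import Order.TTheory GRing.Theory Num.Theory.
Local Open Scope ring_scope.

(* Let h = x - xstar.  Both x and xstar are feasible, so |A h|_2 <= 2 eps, and
   the minimality of xstar gives the cone constraint
   |h_{T0^c}|_p^p <= |h_{T0}|_p^p + 2 |x_{T0^c}|_p^p  for every index set T0.
   For |T0| = k, split T0^c into the set T1 of the k largest entries of h and
   the remaining 2k entries T2.  The RIP on the 2k-sparse vectors h_{T0 u T1}
   and h_{T2} bounds |h_{T0 u T1}|_2 by |h_{T2}|_2 and |A h|_2; the power-mean
   inequality turns l2 masses on k-sets into lp masses; every entry on T2 is
   below the p-mean of T1, so |h_{T2}|_2^2 <= (|h_{T1}|_p^p / k)^(2/p-1) |h_{T2}|_p^p.
   The weighted AM-GM inequality  x^(2/p-1) y <= g(p) (x + y)^(2/p)  then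
   yields the null space property
   |h_{T0}|_p^p <= Cbar |h_{T0^c}|_p^p + 2 k^(1-p/2) |A h|_2^p / (1-d)^(p/2),
   which together with the cone constraint gives the error bound.  In the
   noiseless sparse case, taking T0 to contain the support of x forces h = 0. *)

Section PowerInequalities.
Variable R : realType.
Implicit Types a b c r s t x y : R.

Lemma powRV y r : 0 <= y -> (y^-1) `^ r = (y `^ r)^-1.
Proof. by move=> y0; rewrite -powR_inv1 // -powRrM mulN1r powRN. Qed.

Lemma powR_div x y r : 0 <= x -> 0 <= y -> (x / y) `^ r = x `^ r / y `^ r.
Proof. by move=> x0 y0; rewrite powRM ?invr_ge0 // powRV. Qed.

Lemma sqrtr_powR x r : 0 <= x -> Num.sqrt x `^ r = x `^ (r / 2).
Proof. by move=> x0; rewrite -powR12_sqrt // -powRrM mulrC. Qed.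

Lemma sqr_powR x r : (x ^+ 2) `^ (r / 2) = `|x| `^ r.
Proof.
rewrite -real_normK ?num_real // -powR_mulrn // -powRrM.
by congr (_ `^ _); field.
Qed.

Lemma powR_AMGM x y r : 0 <= x -> 0 <= y -> 0 < r -> r < 1 ->
  x `^ r * y `^ (1 - r) <= r * x + (1 - r) * y.
Proof.
move=> x0 y0 r0 r1.
have r1' : 0 < 1 - r by rewrite subr_gt0.
have conj : r^-1^-1 + (1 - r)^-1^-1 = 1 by rewrite !invrK addrC subrK.
have := conjugate_powR (powR_ge0 x r) (powR_ge0 y (1 - r))
  (eqbRL (invr_gt0 _) r0) (eqbRL (invr_gt0 _) r1') conj.
by rewrite -!powRrM !mulfV ?gt_eqF // !powRr1 // !invrK (mulrC x) (mulrC y).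
Qed.

Lemma powR_subadd s t r : 0 <= s -> 0 <= t -> 0 < r -> r <= 1 ->
  (s + t) `^ r <= s `^ r + t `^ r.
Proof.
move=> s0 t0 r0 r1; set z := s + t.
have [z0|zn0] := eqVneq z 0.
  have [s_eq0 t_eq0] : s = 0 /\ t = 0 by split; rewrite /z in z0; lra.
  by rewrite z0 s_eq0 t_eq0 powR0 ?gt_eqF // addr0.
have z_gt0 : 0 < z by rewrite lt_neqAle eq_sym zn0 addr_ge0.
have zr_gt0 : 0 < z `^ r by rewrite powR_gt0.
have frac_le a : 0 <= a -> a <= z -> a / z <= a `^ r / z `^ r.
  move=> a0 az; rewrite -powR_div ?(ltW z_gt0) //.
  have [->|an0] := eqVneq a 0; first by rewrite mul0r powR_ge0.
  apply: ger1_powR => //; rewrite divr_gt0 ?ler_pdivrMr ?mul1r //=.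
  by rewrite lt_neqAle eq_sym an0.
have := lerD (frac_le s s0 (ler_wpDr t0 (lexx s))) (frac_le t t0 (ler_wpDl s0 (lexx t))).
by rewrite -!mulrDl divff ?gt_eqF // ler_pdivlMr // mul1r.
Qed.

Lemma powR_normD_le x y r : 0 < r -> r <= 1 ->
  `|x + y| `^ r <= `|x| `^ r + `|y| `^ r.
Proof.
move=> r0 r1.
apply: le_trans (powR_subadd (normr_ge0 x) (normr_ge0 y) r0 r1).
by rewrite ge0_ler_powR ?nnegrE ?addr_ge0 ?ler_normD // ltW.
Qed.

Lemma g_ge0 p : 0 <= p -> 0 <= g p :> R.
Proof. by move=> p0; rewrite /g mulr_ge0 ?powR_ge0 ?divr_ge0. Qed.

(* The constant g p is sharp: equality holds when x : y = (2 - p) : p. *)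
Lemma powR_mul_le_g p x y : 0 < p -> p < 1 -> 0 <= x -> 0 <= y ->
  x `^ (2 / p - 1) * y <= g p * (x + y) `^ (2 / p).
Proof.
move=> p0 p1 x0 y0; set r := 1 - p / 2; set q := 2 / p - 1.
have r0 : 0 < r by rewrite /r; lra.
have r1 : r < 1 by rewrite /r; lra.
have r1' : 0 < 1 - r by lra.
have := powR_AMGM (divr_ge0 x0 (ltW r0)) (divr_ge0 y0 (ltW r1')) r0 r1.
have -> : r * (x / r) + (1 - r) * (y / (1 - r)) = x + y by field; rewrite !gt_eqF.
move=> amgm.
have lhs0 : 0 <= (x / r) `^ r * (y / (1 - r)) `^ (1 - r) by rewrite mulr_ge0 ?powR_ge0.
have tp : 0 <= 2 / p by rewrite divr_ge0 // ltW.
have := ge0_ler_powR tp lhs0 (addr_ge0 x0 y0) amgm.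
rewrite powRM ?powR_ge0 // -!powRrM.
have -> : r * (2 / p) = q by rewrite /r /q; field; rewrite gt_eqF.
have -> : (1 - r) * (2 / p) = 1 by rewrite /r; field; rewrite gt_eqF.
have r_ge0 := ltW r0; have r1_ge0 := ltW r1'.
rewrite powRr1 ?divr_ge0 // powR_div // => bound.
have rq0 : 0 < r `^ q by rewrite powR_gt0.
have -> : g p = (1 - r) * r `^ q by rewrite /g /r; congr (_ * _); ring.
have -> : x `^ q * y = x `^ q / r `^ q * (y / (1 - r)) * ((1 - r) * r `^ q).
  by field; rewrite !gt_eqF.
by rewrite mulrC ler_wpM2l // mulr_ge0 // ltW.
Qed.

Lemma sum_powR_le_mean (I : finType) (T : {set I}) (a : I -> R) r :
  0 < r -> r < 1 -> (forall i, 0 <= a i) -> (0 < #|T|)%N ->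
  \sum_(i in T) a i `^ r <= #|T|%:R * ((\sum_(i in T) a i) / #|T|%:R) `^ r.
Proof.
move=> r0 r1 a0 T0; set N : R := #|T|%:R; set m := (\sum_(i in T) a i) / N.
have N0 : 0 < N by rewrite ltr0n.
have [sum0|sum_neq0] := eqVneq (\sum_(i in T) a i) 0.
  have /psumr_eq0P a_eq0 := sum0; rewrite big1 ?mulr_ge0 ?powR_ge0 ?ltW //.
  by move=> i iT; rewrite a_eq0 ?powR0 ?gt_eqF.
have m0 : 0 < m by rewrite divr_gt0 // lt_neqAle eq_sym sum_neq0 sumr_ge0.
have term_le i : a i `^ r <= m `^ r * (r * (a i / m) + (1 - r)).
  have -> : a i `^ r = m `^ r * (a i / m) `^ r.
    have m_ge0 := ltW m0.
    by rewrite -(powRM _ m_ge0 (divr_ge0 (a0 i) m_ge0)) mulrC divfK ?gt_eqF.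
  rewrite ler_wpM2l ?powR_ge0 //.
  have := powR_AMGM (divr_ge0 (a0 i) (ltW m0)) ler01 r0 r1.
  by rewrite powR1 !mulr1.
apply: le_trans (ler_sum _ (fun i _ => term_le i)) _.
rewrite -mulr_sumr big_split /= -mulr_sumr -mulr_suml sumr_const -/N.
have -> : (\sum_(i in T) a i) / m = N by rewrite /m; field; rewrite sum_neq0 gt_eqF.
by rewrite -mulr_natr -/N mulrC; apply: ler_wpM2r; rewrite ?powR_ge0 //; lra.
Qed.

Lemma sum_sqr_le_dominated (I : finType) (B C : {set I}) (a : I -> R) p :
  0 < p -> p <= 2 -> (0 < #|B|)%N -> (forall i, 0 <= a i) ->
  (forall i j, i \in B -> j \in C -> a j <= a i) ->
  \sum_(j in C) a j ^+ 2 <=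
    ((\sum_(i in B) a i `^ p) / #|B|%:R) `^ (2 / p - 1) * \sum_(j in C) a j `^ p.
Proof.
move=> p0 p2 B0 a0 dom; set q := 2 / p - 1.
set mean := (\sum_(i in B) a i `^ p) / #|B|%:R.
have N0 : 0 < #|B|%:R :> R by rewrite ltr0n.
have q0 : 0 <= q by rewrite subr_ge0 ler_pdivlMr // mul1r.
rewrite mulr_sumr; apply: ler_sum => j jC.
have aj_le : a j `^ p <= mean.
  rewrite ler_pdivlMr // mulr_natr -sumr_const; apply: ler_sum => i iB.
  by rewrite ge0_ler_powR // ?nnegrE ?a0 ?dom // ltW.
have -> : a j ^+ 2 = (a j `^ p) `^ q * a j `^ p.
  have pq2 : p * q + p = 2 by rewrite /q; field; rewrite gt_eqF.
  rewrite -powRrM -powRD; last by rewrite pq2 pnatr_eq0.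
  by rewrite pq2 powR_mulrn.
rewrite ler_wpM2r ?powR_ge0 // ge0_ler_powR // nnegrE ?powR_ge0 //.
exact: le_trans (powR_ge0 _ _) aj_le.
Qed.

End PowerInequalities.

Lemma le_sqr_split (R : realType) (t K X U V e : R) :
  0 < t -> t <= 1 -> 0 <= X -> X <= K -> 0 <= e ->
  X - V <= t * K -> U + V <= (Num.sqrt X + e) ^+ 2 ->
  U <= (Num.sqrt (t * K) + e / Num.sqrt t) ^+ 2.
Proof.
move=> t0 t1 X0 XK e0 gap UV.
have K0 : 0 <= K := le_trans X0 XK.
have st0 : 0 < Num.sqrt t by rewrite sqrtr_gt0.
have sXK : Num.sqrt X <= Num.sqrt K by rewrite ler_sqrt.
have e2 : e ^+ 2 <= e ^+ 2 / t by rewrite ler_pdivlMr // ler_piMr // sqr_ge0.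
have -> : (Num.sqrt (t * K) + e / Num.sqrt t) ^+ 2
    = t * K + 2 * e * Num.sqrt K + e ^+ 2 / t.
  rewrite sqrtrM ?(ltW t0) // -[K in t * K](sqr_sqrtr K0) -[t in RHS](sqr_sqrtr (ltW t0)).
  by field; rewrite gt_eqF.
have : (Num.sqrt X + e) ^+ 2 = X + 2 * e * Num.sqrt X + e ^+ 2.
  by rewrite sqrrD sqr_sqrtr //; ring.
have : 2 * e * Num.sqrt X <= 2 * e * Num.sqrt K by rewrite ler_wpM2l ?mulr_ge0.
lra.
Qed.

Section ScalarConeBound.
Variable R : realType.
Implicit Types b c d e p u v w : R.

Lemma tail_gap_le d p b c v w : 0 < p -> p < 1 -> 0 <= d -> d < 1 ->
  0 <= b -> 0 <= c -> 0 <= v -> b <= v `^ (p / 2) -> w <= b `^ (2 / p - 1) * c ->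
  (1 + d) * w - (1 - d) * v <=
    ((1 + d) / 2) `^ (2 / p - 1) * ((1 + d) * g p * (b + c) `^ (2 / p)).
Proof.
move=> p0 p1 d0 d1 b0 c0 v0 bv wbc; set q := 2 / p - 1; set s := b + c.
have P0 : 0 < 1 + d by lra.
have tp : 0 <= 2 / p by rewrite divr_ge0 // ltW.
have bq0 : 0 <= b `^ q := powR_ge0 _ _.
have bqv : b * b `^ q <= v.
  rewrite mulr_powRB1 //; last by rewrite divr_gt0.
  have := ge0_ler_powR tp b0 (powR_ge0 _ _) bv.
  have p22 : p / 2 * (2 / p) = 1 by field; rewrite gt_eqF.
  by rewrite -powRrM p22 powRr1.
have gap_le : (1 + d) * w - (1 - d) * v <= b `^ q * ((1 + d) * s - 2 * b).
  have : (1 + d) * w <= (1 + d) * (b `^ q * c) by rewrite ler_pM2l.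
  have : (1 - d) * (b * b `^ q) <= (1 - d) * v by rewrite ler_wpM2l //; lra.
  rewrite /s; nra.
apply: le_trans gap_le _.
have K0 : 0 <= (1 + d) * g p * s `^ (2 / p).
  by apply: mulr_ge0; rewrite ?powR_ge0 // mulr_ge0 ?g_ge0 // ltW.
have [y_le0|y_gt0] := lerP ((1 + d) * s - 2 * b) 0.
  apply: le_trans (_ : 0 <= _); first by rewrite mulr_ge0_le0.
  by rewrite mulr_ge0 ?powR_ge0.
(* Split (1 + d) (b + c) as 2 b plus the positive rest. *)
have := powR_mul_le_g p0 p1 (mulr_ge0 (ler0n _ 2) b0) (ltW y_gt0).
rewrite (addrC (2 * b)) subrK (powRM _ (ler0n _ 2) b0) -/q.
rewrite (powRM _ (ltW P0) (addr_ge0 b0 c0)) -(mulr_powRB1 (ltW P0)); last first.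
  by rewrite divr_gt0.
rewrite powR_div ?(ltW P0) // -/q -/s => key.
have twoq : 0 < 2 `^ q by rewrite powR_gt0.
rewrite -(ler_pM2l twoq) mulrA.
have -> : 2 `^ q * ((1 + d) `^ q / 2 `^ q * ((1 + d) * g p) * s `^ (2 / p))
    = g p * ((1 + d) * (1 + d) `^ q * s `^ (2 / p)) by field; rewrite gt_eqF.
by rewrite [X in X <= _]mulrA.
Qed.

Lemma half_le_powR_gap d p : 0 < p -> p < 1 -> 0 <= d -> d < 1 ->
  1 / 2 <= (((1 + d) / 2) `^ (2 / p - 1)) `^ (p / 2).
Proof.
move=> p0 p1 d0 d1; rewrite -powRrM.
have -> : (2 / p - 1) * (p / 2) = 1 - p / 2 by field; rewrite gt_eqF.
apply: le_trans (ger1_powR _ _); first by rewrite ler_pM2r ?invr_gt0 //; lra.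
  by rewrite divr_gt0 ?ler_pdivrMr //=; lra.
by lra.
Qed.

Lemma Cbar_powR_eq d p s : 0 < p -> 0 <= d -> d < 1 -> 0 <= s ->
  (((1 + d) / 2) `^ (2 / p - 1) * ((1 + d) * g p * s `^ (2 / p))) `^ (p / 2)
    = (1 - d) `^ (p / 2) * Cbar d p * s.
Proof.
move=> p0 d0 d1 s0.
have P0 : 0 < 1 + d by lra.
have M0 : 0 < 1 - d by lra.
have g0 : 0 <= g p := g_ge0 (ltW p0).
have half_ge0 : 0 <= (1 + d) / 2 by rewrite divr_ge0 // ltW.
have Pg0 : 0 <= (1 + d) * g p := mulr_ge0 (ltW P0) g0.
rewrite (powRM _ (powR_ge0 _ _) (mulr_ge0 Pg0 (powR_ge0 _ _))).
rewrite (powRM _ Pg0 (powR_ge0 _ _)) (powRM _ (ltW P0) g0) -!powRrM.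
have -> : (2 / p - 1) * (p / 2) = 1 - p / 2 by field; rewrite gt_eqF.
have -> : 2 / p * (p / 2) = 1 by field; rewrite gt_eqF.
rewrite powRr1 // /Cbar (powR_div _ g0 (ltW M0)) (powR_div _ (ltW P0) (ler0n _ 2)).
have -> : 2 `^ (p / 2 - 1) = (2 `^ (1 - p / 2))^-1 by rewrite -powRN opprB.
have PP : (1 + d) `^ (1 - p / 2) * (1 + d) `^ (p / 2) = 1 + d.
  by rewrite -powRD ?subrK ?powRr1 ?(ltW P0) // gt_eqF ?implybT.
have two0 : 0 < 2 `^ (1 - p / 2) by rewrite powR_gt0.
have Mp0 : 0 < (1 - d) `^ (p / 2) by rewrite powR_gt0.
rewrite -[in RHS]PP; field; rewrite !gt_eqF //.
Qed.

Lemma cone_scalar_bound d p eta u v w b c e : 0 < p -> p < 1 -> 0 <= d -> d < 1 ->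
  0 <= u -> 0 <= v -> 0 <= w -> 0 <= b -> 0 <= c -> 0 <= e ->
  eta <= u `^ (p / 2) -> b <= v `^ (p / 2) -> w <= b `^ (2 / p - 1) * c ->
  (1 - d) * (u + v) <= (Num.sqrt ((1 + d) * w) + e) ^+ 2 ->
  eta <= Cbar d p * (b + c) + 2 * e `^ p / (1 - d) `^ (p / 2).
Proof.
move=> p0 p1 d0 d1 u0 v0 w0 b0 c0 e0 eta_u bv wbc rip.
set t := ((1 + d) / 2) `^ (2 / p - 1); set K := (1 + d) * g p * (b + c) `^ (2 / p).
have P0 : 0 < 1 + d by lra.
have M0 : 0 < 1 - d by lra.
have t0 : 0 < t by rewrite powR_gt0 // divr_gt0.
have t1 : t <= 1.
  rewrite /t -[X in _ <= X](powRr0 ((1 + d) / 2)); apply: ger_powR.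
    by rewrite divr_gt0 ?ler_pdivrMr //=; lra.
  by rewrite subr_ge0 ler_pdivlMr // mul1r; lra.
have wK : (1 + d) * w <= K.
  rewrite /K -mulrA ler_pM2l //; apply: le_trans wbc _.
  exact: powR_mul_le_g.
have gap := tail_gap_le p0 p1 d0 d1 b0 c0 v0 bv wbc.
have Mu : (1 - d) * u <= (Num.sqrt (t * K) + e / Num.sqrt t) ^+ 2.
  apply: le_sqr_split t0 t1 (mulr_ge0 (ltW P0) w0) wK e0 gap _.
  by rewrite -mulrDr.
have tK0 : 0 <= t * K.
  by apply: mulr_ge0 (ltW t0) (le_trans (mulr_ge0 (ltW P0) w0) wK).
have p20 : 0 <= p / 2 by rewrite divr_ge0 // ltW.
have Mu_p : ((1 - d) * u) `^ (p / 2) <= (t * K) `^ (p / 2) + e `^ p / t `^ (p / 2).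
  have := ge0_ler_powR p20 (mulr_ge0 (ltW M0) u0) (sqr_ge0 _) Mu.
  rewrite sqr_powR ger0_norm ?addr_ge0 ?sqrtr_ge0 ?divr_ge0 ?sqrtr_ge0 // => le1.
  apply: le_trans le1 (le_trans (powR_subadd _ _ p0 (ltW p1)) _);
    rewrite ?sqrtr_ge0 ?divr_ge0 ?sqrtr_ge0 //.
  by rewrite powR_div ?sqrtr_ge0 // !sqrtr_powR // ltW.
have Cb := Cbar_powR_eq p0 d0 d1 (addr_ge0 b0 c0); rewrite -/t -/K in Cb.
have t_half := half_le_powR_gap p0 p1 d0 d1; rewrite -/t in t_half.
have Mp0 : 0 < (1 - d) `^ (p / 2) by rewrite powR_gt0.
have tp0 : 0 < t `^ (p / 2) by rewrite powR_gt0.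
have u_eq : u `^ (p / 2) = ((1 - d) * u) `^ (p / 2) / (1 - d) `^ (p / 2).
  by rewrite powRM ?(ltW M0) // mulrAC divff ?gt_eqF // mul1r.
apply: le_trans eta_u _; rewrite u_eq ler_pdivrMr // [X in _ <= X]mulrDl divfK ?gt_eqF //.
apply: le_trans Mu_p _; rewrite Cb [Cbar d p * _ * _]mulrC -[_ * Cbar d p * _]mulrA.
rewrite lerD2l.
have ep0 : 0 <= e `^ p := powR_ge0 _ _.
rewrite ler_pdivrMr //; nra.
Qed.

(* Used with K = k: eta, b, c are the p-th power masses of h on T0, T1, T2,
   u, v, w its squared l2 masses on T0, T1, T2, and e = |A h|_2. *)
Lemma cone_scalar_bound_scaled d p K eta u v w b c e :
  0 < p -> p < 1 -> 0 <= d -> d < 1 -> 0 < K ->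
  0 <= u -> 0 <= v -> 0 <= w -> 0 <= b -> 0 <= c -> 0 <= e ->
  eta <= K * (u / K) `^ (p / 2) -> b <= K * (v / K) `^ (p / 2) ->
  w <= (b / K) `^ (2 / p - 1) * c ->
  (1 - d) * (u + v) <= (Num.sqrt ((1 + d) * w) + e) ^+ 2 ->
  eta <= Cbar d p * (b + c) + 2 * K `^ (1 - p / 2) * e `^ p / (1 - d) `^ (p / 2).
Proof.
move=> p0 p1 d0 d1 K0 u0 v0 w0 b0 c0 e0 eta_u bv wbc rip.
have sK0 : 0 < Num.sqrt K by rewrite sqrtr_gt0.
have nK z : 0 <= z -> 0 <= z / K by move=> z0; rewrite divr_ge0 // ltW.
have KK : K = Num.sqrt K ^+ 2 by rewrite sqr_sqrtr // ltW.
have Pw0 : 0 <= (1 + d) * w by rewrite mulr_ge0 //; lra.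
have eta_u' : eta / K <= (u / K) `^ (p / 2) by rewrite ler_pdivrMr // mulrC.
have bv' : b / K <= (v / K) `^ (p / 2) by rewrite ler_pdivrMr // mulrC.
have wbc' : w / K <= (b / K) `^ (2 / p - 1) * (c / K) by rewrite mulrA ler_pM2r ?invr_gt0.
have rip' : (1 - d) * (u / K + v / K) <=
    (Num.sqrt ((1 + d) * (w / K)) + e / Num.sqrt K) ^+ 2.
  rewrite mulrA sqrtrM // sqrtrV ?(ltW K0) // -mulrDl -mulrDl expr_div_n -KK mulrA.
  by rewrite ler_pM2r ?invr_gt0.
have := cone_scalar_bound p0 p1 d0 d1 (nK _ u0) (nK _ v0) (nK _ w0) (nK _ b0) (nK _ c0)
  (divr_ge0 e0 (ltW sK0)) eta_u' bv' wbc' rip'.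
have Kp0 : 0 < K `^ (p / 2) by rewrite powR_gt0.
have Mp0 : 0 < (1 - d) `^ (p / 2) by rewrite powR_gt0 //; lra.
have -> : Cbar d p * (b + c) + 2 * K `^ (1 - p / 2) * e `^ p / (1 - d) `^ (p / 2)
    = (Cbar d p * (b / K + c / K) + 2 * (e / Num.sqrt K) `^ p / (1 - d) `^ (p / 2)) * K.
  rewrite powR_div ?sqrtr_ge0 // sqrtr_powR ?(ltW K0) // powRB ?powRr1 ?(ltW K0) //.
    by field; rewrite !gt_eqF.
  by rewrite (gt_eqF K0) implybT.
by rewrite -ler_pdivrMr.
Qed.

End ScalarConeBound.

Lemma sum_mul_le_sqrt (R : realType) (I : finType) (u v : I -> R) :
  \sum_i u i * v i <= Num.sqrt (\sum_i u i ^+ 2) * Num.sqrt (\sum_i v i ^+ 2).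
Proof.
set U := \sum_i u i ^+ 2; set V := \sum_i v i ^+ 2; set S := \sum_i u i * v i.
have U0 : 0 <= U by rewrite sumr_ge0 // => i _; exact: sqr_ge0.
have V0 : 0 <= V by rewrite sumr_ge0 // => i _; exact: sqr_ge0.
suff S2 : S ^+ 2 <= U * V.
  rewrite -sqrtrM //; apply: le_trans (ler_norm S) _.
  by rewrite -sqrtr_sqr ler_sqrt // mulr_ge0.
have [U_eq0|U_neq0] := eqVneq U 0.
  have /psumr_eq0P u_eq0 := U_eq0.
  rewrite U_eq0 mul0r /S big1 ?expr0n // => i _.
  have /eqP -> : u i == 0 by rewrite -sqrf_eq0 u_eq0 // => j _; exact: sqr_ge0.
  by rewrite mul0r.
have U_gt0 : 0 < U by rewrite lt_neqAle eq_sym U_neq0.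
have : 0 <= \sum_i (S / U * u i - v i) ^+ 2 by rewrite sumr_ge0 // => i _; exact: sqr_ge0.
have -> : \sum_i (S / U * u i - v i) ^+ 2 = V - S ^+ 2 / U.
  rewrite (eq_bigr (fun i =>
      (S / U) ^+ 2 * u i ^+ 2 - 2 * (S / U) * (u i * v i) + v i ^+ 2)); last first.
    by move=> i _; ring.
  rewrite !big_split /= sumrN -!mulr_sumr -/U -/V -/S.
  by field; rewrite gt_eqF.
by rewrite subr_ge0 ler_pdivrMr // mulrC.
Qed.

Section EuclideanNorm.
Variables (R : realType) (n : nat).
Implicit Types (u v : 'cV[R]_n) (T : {set 'I_n}).

Lemma l2norm_ge0 v : 0 <= l2norm v.
Proof. exact: sqrtr_ge0. Qed.

Lemma sqr_l2norm v : l2norm v ^+ 2 = \sum_i v i ord0 ^+ 2.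
Proof. by rewrite sqr_sqrtr // sumr_ge0 // => i _; exact: sqr_ge0. Qed.

Lemma sqr_l2norm_restrict v T : l2norm (restrict v T) ^+ 2 = \sum_(i in T) v i ord0 ^+ 2.
Proof.
rewrite sqr_l2norm [RHS]big_mkcond /=; apply: eq_bigr => i _.
by rewrite mxE; case: ifP => // _; rewrite expr0n.
Qed.

Lemma l2normN v : l2norm (- v) = l2norm v.
Proof. by congr Num.sqrt; apply: eq_bigr => i _; rewrite mxE sqrrN. Qed.

Lemma l2normD u v : l2norm (u + v) <= l2norm u + l2norm v.
Proof.
rewrite -ler_sqr ?nnegrE ?addr_ge0 ?l2norm_ge0 // sqrrD !sqr_l2norm.
have -> : \sum_i (u + v) i ord0 ^+ 2
    = \sum_i u i ord0 ^+ 2 + \sum_i v i ord0 ^+ 2 + 2 * \sum_i u i ord0 * v i ord0.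
  by rewrite mulr_sumr -!big_split /=; apply: eq_bigr => i _; rewrite mxE; ring.
have := sum_mul_le_sqrt (fun i => u i ord0) (fun i => v i ord0).
rewrite -/(l2norm u) -/(l2norm v) => cs; lra.
Qed.

Lemma l2normB u v : l2norm (u - v) <= l2norm u + l2norm v.
Proof. by rewrite -(l2normN v) l2normD. Qed.

Lemma restrict_addC v T : restrict v T + restrict v (~: T) = v.
Proof.
apply/matrixP => i j; rewrite !mxE (ord1 j) inE.
by case: (i \in T); rewrite ?addr0 ?add0r.
Qed.

Lemma sparse_restrict s v T : (#|T| <= s)%N -> sparse s (restrict v T).
Proof.
move=> Ts; apply: leq_trans Ts; apply: subset_leq_card.
by apply/subsetP => i; rewrite inE mxE; case: ifP => // _; rewrite eqxx.
Qed.

End EuclideanNorm.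

Lemma rip_split_bound (R : realType) (m n s : nat) (A : 'M[R]_(m, n)) d
    (z1 z2 : 'cV[R]_n) :
  RIP_bound A s d -> sparse s z1 -> sparse s z2 ->
  (1 - d) * l2norm z1 ^+ 2 <=
    (Num.sqrt ((1 + d) * l2norm z2 ^+ 2) + l2norm (A *m (z1 + z2))) ^+ 2.
Proof.
move=> rip s1 s2; have [lower1 _] := rip z1 s1; have [_ upper2] := rip z2 s2.
apply: le_trans lower1 _.
rewrite ler_sqr ?nnegrE ?l2norm_ge0 ?addr_ge0 ?sqrtr_ge0 ?l2norm_ge0 //.
have -> : A *m z1 = A *m (z1 + z2) - A *m z2 by rewrite mulmxDr addrK.
apply: le_trans (l2normB _ _) _; rewrite addrC lerD2r.
rewrite -[l2norm (A *m z2)](ger0_norm (l2norm_ge0 _)) -sqrtr_sqr.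
by rewrite ler_sqrt // (le_trans (sqr_ge0 _) upper2).
Qed.

Section ChoosingSubsets.
Variable T : finType.
Implicit Types A B C S : {set T}.

Lemma exists_subset_card A k :
  (k <= #|A|)%N -> exists2 B : {set T}, B \subset A & #|B| = k.
Proof.
move/card_geqP => [s [s_uniq s_size sA]].
exists [set x in s]; first by apply/subsetP => x; rewrite inE; exact: sA.
by rewrite cardsE (card_uniqP s_uniq).
Qed.

Lemma exists_superset_card S k : (#|S| <= k <= #|T|)%N ->
  exists2 B : {set T}, S \subset B & #|B| = k.
Proof.
move=> /andP[Sk kT].
have [C CS Ck] : exists2 C : {set T}, C \subset ~: S & #|C| = (k - #|S|)%N.
  by apply: exists_subset_card; rewrite cardsCs; lia.
exists (S :|: C); first exact: subsetUl.
rewrite cardsU Ck (_ : S :&: C = set0) ?cards0; first lia.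
by apply/disjoint_setI0; rewrite disjoint_sym disjoints_subset.
Qed.

Lemma exists_top_subset (R : realType) (a : T -> R) C k : (k <= #|C|)%N ->
  exists B : {set T}, [/\ B \subset C, #|B| = k &
    forall i j, i \in B -> j \in C :\: B -> a j <= a i].
Proof.
move=> kC; have [B0 B0C B0k] := exists_subset_card kC.
pose P B := (B \subset C) && (#|B| == k).
have PB0 : P B0 by rewrite /P B0C B0k eqxx.
case: (Order.TotalTheory.arg_maxP (fun B => \sum_(i in B) a i) PB0) => B.
move=> /andP[BC /eqP Bk] Bmax; exists B; split => // i j iB.
rewrite in_setD => /andP[jB jC]; rewrite leNgt; apply/negP => aij.
set B' := j |: (B :\ i).
have jBi : j \notin B :\ i by rewrite in_setD1 (negbTE jB) andbF.
have PB' : P B'.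
  rewrite /P subUset sub1set jC (subset_trans (subD1set _ _) BC) /=.
  by rewrite cardsU1 jBi -Bk (cardsD1 i B) iB.
have := Bmax B' PB'; rewrite big_setU1 //= (big_setD1 i iB) /=; lra.
Qed.

End ChoosingSubsets.

Lemma sum_setC_split (R : realType) (I : finType) (F : I -> R) (T : {set I}) :
  \sum_i F i = \sum_(i in T) F i + \sum_(i in ~: T) F i.
Proof.
by rewrite (bigID (mem T)) /=; congr (_ + _); apply: eq_bigl => i; rewrite inE.
Qed.

Section LpQuasiNorm.
Variables (R : realType) (n : nat) (p : R).
Implicit Types (u v x y : 'cV[R]_n) (T : {set 'I_n}).

Lemma lpnorm_powR v : 0 < p -> lpnorm p v `^ p = \sum_i `|v i ord0| `^ p.
Proof.
move=> p0; rewrite /lpnorm -powRrM mul1r mulVf ?gt_eqF // powRr1 //.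
by rewrite sumr_ge0 // => i _; exact: powR_ge0.
Qed.

Lemma lpnorm_restrict_powR v T : 0 < p ->
  lpnorm p (restrict v T) `^ p = \sum_(i in T) `|v i ord0| `^ p.
Proof.
move=> p0; rewrite lpnorm_powR // [RHS]big_mkcond /=; apply: eq_bigr => i _.
by rewrite mxE; case: ifP => // _; rewrite normr0 powR0 // gt_eqF.
Qed.

Lemma lp_cone x y T : 0 < p -> p <= 1 ->
  \sum_i `|y i ord0| `^ p <= \sum_i `|x i ord0| `^ p ->
  \sum_(i in ~: T) `|(x - y) i ord0| `^ p <=
    \sum_(i in T) `|(x - y) i ord0| `^ p + 2 * \sum_(i in ~: T) `|x i ord0| `^ p.
Proof.
move=> p0 p1; rewrite (sum_setC_split _ T) [X in _ <= X](sum_setC_split _ T) => y_le_x.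
have x_le i : `|x i ord0| `^ p <= `|y i ord0| `^ p + `|(x - y) i ord0| `^ p.
  by rewrite -[x i ord0](subrK (y i ord0)) addrC !mxE powR_normD_le // addrC.
have h_le i : `|(x - y) i ord0| `^ p <= `|x i ord0| `^ p + `|y i ord0| `^ p.
  by rewrite !mxE -(normrN (y i ord0)) powR_normD_le.
have : \sum_(i in T) `|x i ord0| `^ p <=
    \sum_(i in T) (`|y i ord0| `^ p + `|(x - y) i ord0| `^ p).
  by apply: ler_sum => i _; exact: x_le.
have : \sum_(i in ~: T) `|(x - y) i ord0| `^ p <=
    \sum_(i in ~: T) (`|x i ord0| `^ p + `|y i ord0| `^ p).
  by apply: ler_sum => i _; exact: h_le.
rewrite !big_split /=; lra.
Qed.

Lemma sum_powR_le_l2_mean v T : 0 < p -> p < 2 -> (0 < #|T|)%N ->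
  \sum_(i in T) `|v i ord0| `^ p <=
    #|T|%:R * ((\sum_(i in T) v i ord0 ^+ 2) / #|T|%:R) `^ (p / 2).
Proof.
move=> p0 p2 T0; rewrite -(eq_bigr _ (fun i _ => sqr_powR (v i ord0) p)).
apply: sum_powR_le_mean => //; first by rewrite divr_gt0.
  by rewrite ltr_pdivrMr // mul1r.
by move=> i; exact: sqr_ge0.
Qed.

Lemma lpnorm_le_sum_powR u v : 0 < p -> lpnorm p u <= lpnorm p v ->
  \sum_i `|u i ord0| `^ p <= \sum_i `|v i ord0| `^ p.
Proof.
move=> p0 uv; rewrite -(lpnorm_powR u p0) -(lpnorm_powR v p0).
by rewrite ge0_ler_powR ?nnegrE ?powR_ge0 // ltW.
Qed.

Lemma sum_powR_le0_eq0 v : 0 < p -> \sum_i `|v i ord0| `^ p <= 0 -> v = 0.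
Proof.
move=> p0 v_le0; apply/matrixP => i j; rewrite (ord1 j) mxE.
have /psumr_eq0P v_eq0 : \sum_i `|v i ord0| `^ p = 0.
  by apply/eqP; rewrite eq_le v_le0 sumr_ge0 // => l _; exact: powR_ge0.
have /powR_eq0_eq0/normr0_eq0 // : `|v i ord0| `^ p = 0.
  by apply: v_eq0 => // l _; exact: powR_ge0.
Qed.

Lemma sparse_tail_eq0 k x : 0 < p -> (k <= n)%N -> sparse k x ->
  exists2 T0 : {set 'I_n}, #|T0| = k & \sum_(i in ~: T0) `|x i ord0| `^ p = 0.
Proof.
move=> p0 kn x_sparse; set S := [set i : 'I_n | x i ord0 != 0].
have [T0 ST0 T0k] : exists2 T0 : {set 'I_n}, S \subset T0 & #|T0| = k.
  by apply: exists_superset_card; rewrite card_ord x_sparse.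
exists T0 => //; apply: big1 => i; rewrite inE => iT0.
have : i \notin S by apply: contra iT0; exact: subsetP.
by rewrite inE negbK => /eqP ->; rewrite normr0 (powR0 (lt0r_neq0 p0)).
Qed.

End LpQuasiNorm.

Lemma card_ord_prefix n k : (k <= n)%N -> #|~: [set i : 'I_n | (k <= i)%N]| = k.
Proof.
move=> kn; rewrite -sum1_card (eq_bigl (fun i : 'I_n => (i < k)%N)) => [|i].
  by rewrite (big_ord_narrow kn) sum1_card card_ord.
by rewrite !inE -ltnNge.
Qed.

Lemma null_space_property (R : realType) (k m : nat) (A : 'M[R]_(m, 4 * k)) d p
    (h : 'cV[R]_(4 * k)) (T0 : {set 'I_(4 * k)}) :
  (0 < k)%N -> RIP_bound A (2 * k) d -> 0 <= d -> d < 1 -> 0 < p -> p < 1 ->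
  #|T0| = k ->
  \sum_(i in T0) `|h i ord0| `^ p <=
    Cbar d p * \sum_(i in ~: T0) `|h i ord0| `^ p
    + 2 * k%:R `^ (1 - p / 2) * l2norm (A *m h) `^ p / (1 - d) `^ (p / 2).
Proof.
move=> k0 rip d0 d1 p0 p1 T0k.
pose a i := `|h i ord0|; set K : R := k%:R.
have C3k : #|~: T0| = (3 * k)%N by rewrite cardsCs setCK card_ord T0k; lia.
have kC : (k <= #|~: T0|)%N by rewrite C3k; lia.
have [T1 [T1C T1k T1top]] := exists_top_subset a kC.
set T2 := ~: T0 :\: T1.
have T2k : #|T2| = (2 * k)%N by rewrite cardsD (setIidPr T1C) C3k T1k; lia.
have h_split : h = restrict h (T0 :|: T1) + restrict h T2.
  by rewrite /T2 setDE -setCU restrict_addC.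
have T01k : (#|T0 :|: T1| <= 2 * k)%N by rewrite cardsU T0k T1k; lia.
have := rip_split_bound rip (sparse_restrict h T01k) (sparse_restrict h (eq_leq T2k)).
rewrite -h_split !sqr_l2norm_restrict (big_setID T0) /= setUK setDUl setDv set0U.
rewrite setDE (setIidPl T1C).
set U := \sum_(i in T0) _; set V := \sum_(i in T1) _; set W := \sum_(i in T2) _.
move=> rip_UVW.
have K0 : 0 < K by rewrite ltr0n.
have p2 : p < 2 by lra.
have mean_bound (T : {set 'I_(4 * k)}) : #|T| = k ->
    \sum_(i in T) a i `^ p <= K * ((\sum_(i in T) h i ord0 ^+ 2) / K) `^ (p / 2).
  move=> Tk; have T_gt0 : (0 < #|T|)%N by rewrite Tk.
  by have := sum_powR_le_l2_mean h p0 p2 T_gt0; rewrite Tk.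
have T1_gt0 : (0 < #|T1|)%N by rewrite T1k.
have tail := sum_sqr_le_dominated (a := a) p0 (ltW p2) T1_gt0 (fun i => normr_ge0 _)
  T1top.
have W_eq : W = \sum_(i in T2) a i ^+ 2.
  by apply: eq_bigr => i _; rewrite /a real_normK ?num_real.
rewrite T1k -/K -W_eq in tail.
have sqr_sum_ge0 (T : {set 'I_(4 * k)}) : 0 <= \sum_(i in T) h i ord0 ^+ 2.
  by rewrite sumr_ge0 // => i _; exact: sqr_ge0.
have pow_sum_ge0 (T : {set 'I_(4 * k)}) : 0 <= \sum_(i in T) a i `^ p.
  by rewrite sumr_ge0 // => i _; exact: powR_ge0.
rewrite [\sum_(i in ~: T0) _](big_setID T1) /= (setIidPr T1C).
exact: cone_scalar_bound_scaled p0 p1 d0 d1 K0 (sqr_sum_ge0 T0) (sqr_sum_ge0 T1)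
  (sqr_sum_ge0 T2) (pow_sum_ge0 T1) (pow_sum_ge0 T2) (l2norm_ge0 _)
  (mean_bound T0 T0k) (mean_bound T1 T1k) tail rip_UVW.
Qed.

Lemma l2norm_mulmxB_le (R : realType) (m n : nat) (A : 'M[R]_(m, n)) y u v eps :
  l2norm (y - A *m u) <= eps -> l2norm (y - A *m v) <= eps ->
  l2norm (A *m (u - v)) <= 2 * eps.
Proof.
move=> hu hv; have -> : A *m (u - v) = (y - A *m v) - (y - A *m u).
  by rewrite mulmxBr opprB [RHS]addrC addrA subrK.
by apply: le_trans (l2normB _ _) _; lra.
Qed.

Lemma cone_combination (R : realType) (c D H S s : R) :
  0 <= c -> c < 1 -> 0 <= s -> 0 <= D ->
  H <= c * S + D -> S <= H + 2 * s ->
  H + S <= 2 * (1 + c) / (1 - c) * s + 2 * D / (1 - c).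
Proof.
move=> c0 c1 s0 D0 HS SH; have c1' : 0 < 1 - c by lra.
have -> : 2 * (1 + c) / (1 - c) * s + 2 * D / (1 - c)
    = (2 * (1 + c) * s + 2 * D) / (1 - c) by field; rewrite gt_eqF.
rewrite ler_pdivlMr //.
have : c * S <= c * (H + 2 * s) by rewrite ler_wpM2l.
nra.
Qed.

Lemma lp_error_bound (R : realType) (k m : nat) (A : 'M[R]_(m, 4 * k)) d p eps
    (x xstar : 'cV[R]_(4 * k)) (T0 : {set 'I_(4 * k)}) :
  (0 < k)%N -> RIP_bound A (2 * k) d -> 0 <= d -> d < 1 -> 0 < p -> p < 1 ->
  Cbar d p < 1 -> 0 <= eps -> l2norm (A *m (x - xstar)) <= 2 * eps ->
  \sum_i `|xstar i ord0| `^ p <= \sum_i `|x i ord0| `^ p -> #|T0| = k ->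
  \sum_i `|(x - xstar) i ord0| `^ p <=
    C0bar d p * \sum_(i in ~: T0) `|x i ord0| `^ p
    + C1bar d p * k%:R `^ (1 - p / 2) * eps `^ p.
Proof.
move=> k0 rip d0 d1 p0 p1 c1 eps0 Ah_le xstar_le T0k.
have nsp := null_space_property (x - xstar) k0 rip d0 d1 p0 p1 T0k.
have cone := lp_cone T0 p0 (ltW p1) xstar_le.
set K : R := k%:R in nsp *.
set D := 2 * K `^ (1 - p / 2) * (2 * eps) `^ p / (1 - d) `^ (p / 2).
have Mp0 : 0 < (1 - d) `^ (p / 2) by rewrite powR_gt0 // subr_gt0.
have Kp0 : 0 <= 2 * K `^ (1 - p / 2) by rewrite mulr_ge0 ?powR_ge0.
have nsp_D : \sum_(i in T0) `|(x - xstar) i ord0| `^ p <=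
    Cbar d p * \sum_(i in ~: T0) `|(x - xstar) i ord0| `^ p + D.
  apply: le_trans nsp _; rewrite lerD2l ler_pM2r ?invr_gt0 // ler_wpM2l //.
  by rewrite ge0_ler_powR ?nnegrE ?l2norm_ge0 ?mulr_ge0 // ltW.
have c0 : 0 <= Cbar d p by rewrite /Cbar !mulr_ge0 ?powR_ge0 //; lra.
have D0 : 0 <= D by rewrite divr_ge0 ?mulr_ge0 ?powR_ge0 // ltW.
have sigma0 : 0 <= \sum_(i in ~: T0) `|x i ord0| `^ p.
  by rewrite sumr_ge0 // => i _; exact: powR_ge0.
have C1_eq : C1bar d p * K `^ (1 - p / 2) * eps `^ p = 2 * D / (1 - Cbar d p).
  rewrite /D /C1bar powRM ?ler0n // powRD ?pnatr_eq0 ?implybT // powR_mulrn //.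
  by field; rewrite !gt_eqF // subr_gt0.
rewrite (sum_setC_split _ T0) /C0bar C1_eq.
exact: cone_combination c0 c1 sigma0 D0 nsp_D cone.
Qed.

Theorem theorem3 (R : realType) (k m : nat) (A : 'M[R]_(m, 4 * k)) (d : R)
  (x : 'cV[R]_(4 * k)) (eps : R) (e : 'cV[R]_m) (p : R) (xstar : 'cV[R]_(4 * k)) :
  (0 < k)%N -> (0 < m)%N ->
  is_RIC A (2 * k) d -> Num.sqrt 2 / 2 <= d -> d < 1 ->
  0 <= eps -> l2norm e <= eps ->
  0 < p -> p < 1 ->
  (* xstar solves min ||gamma||_p s.t. ||y - A gamma||_2 <= eps, y = A x + e *)
  l2norm ((A *m x + e) - A *m xstar) <= eps ->
  (forall gamma : 'cV[R]_(4 * k),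
      l2norm ((A *m x + e) - A *m gamma) <= eps -> lpnorm p xstar <= lpnorm p gamma) ->
  Cbar d p < 1 ->
  lpnorm p (x - xstar) `^ p <=
    C0bar d p * lpnorm p (restrict x [set i : 'I_(4 * k) | (k <= i)%N]) `^ p
    + C1bar d p * k%:R `^ (1 - p / 2) * eps `^ p
  /\ (eps = 0 -> sparse k x -> xstar = x).
Proof.
move=> k0 _ [rip _] d_ge d1 eps0 e_le p0 p1 xstar_feas xstar_min c1.
have d0 : 0 <= d by apply: le_trans d_ge; rewrite divr_ge0 ?sqrtr_ge0.
have x_feas : l2norm ((A *m x + e) - A *m x) <= eps by rewrite addrAC subrr add0r.
have Ah_le := l2norm_mulmxB_le x_feas xstar_feas.
have xstar_le := lpnorm_le_sum_powR p0 (xstar_min x x_feas).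
have error_bound := lp_error_bound k0 rip d0 d1 p0 p1 c1 eps0 Ah_le xstar_le.
have k4k : (k <= 4 * k)%N by rewrite leq_pmull.
split.
  have := error_bound _ (card_ord_prefix k4k).
  by rewrite setCK -(lpnorm_restrict_powR x _ p0) -(lpnorm_powR (x - xstar) p0).
move=> eps_eq0 x_sparse; have [T0 T0k tail0] := sparse_tail_eq0 p0 k4k x_sparse.
have := error_bound T0 T0k; rewrite tail0 eps_eq0 (powR0 (lt0r_neq0 p0)) !mulr0 addr0.
by move/(sum_powR_le0_eq0 p0)/eqP; rewrite subr_eq0 eq_sym => /eqP.
Qed.
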